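(* Let $d=2$, $r>\frac32$, $\beta>0$, let $\eta$ be a complex-valued mean-zero function on $\Omega=[0,2\pi]^2$ with $\|\Lambda^{1/2}\eta\|_\beta<\infty$, and let $\mathbf u=(-R_2\eta,R_1\eta)$. Then $$|\langle \mathbf u\cdot\nabla\eta,\ \Lambda^{2r}e^{2\beta\Lambda}\eta\rangle|\le C\,2^rC_W(r)\,\|\eta\|_\beta\,\|\Lambda^{1/2}\eta\|_\beta^2,$$ with $C>0$ an absolute constant.
   Context: Periodic functions on $\Omega=[0,2\pi]^2$ with zero mean; $\langle\cdot,\cdot\rangle$ is the complex $L^2$ inner product. $\Lambda=(-\Delta)^{1/2}$ acts on Fourier coefficients by multiplication by $|\mathbf k|$; $R_j=\partial_j\Lambda^{-1}$ are the Riesz transforms (multiplier $ik_j/|\mathbf k|$). $\|\eta\|_\beta=\|\Lambda^re^{\beta\Lambda}\eta\|$, i.e. $\|\eta\|_\beta^2=(2\pi)^2\sum_{\mathbf k\ne0}|\mathbf k|^{2r}e^{2\beta|\mathbf k|}|\hat\eta(\mathbf k)|^2$. $C_W(r)=\frac{1}{2\pi}\frac{2r-2}{2r-3}$ (the general formula $\frac{1}{\pi2^{d-1}}\frac{2r-d}{2r-1-d}$ with $d=2$). *)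

From Stdlib Require Import Reals Lra ZArith List.
Open Scope R_scope.

Definition Cx : Type := (R * R)%type.
Definition Cmul (z w : Cx) : Cx :=
  (fst z * fst w - snd z * snd w, fst z * snd w + snd z * fst w).
Definition Cconj (z : Cx) : Cx := (fst z, - snd z).
Definition Cscal (a : R) (z : Cx) : Cx := (a * fst z, a * snd z).
Definition Cmod (z : Cx) : R := sqrt (fst z ^ 2 + snd z ^ 2).
Definition Cnorm2 (z : Cx) : R := fst z ^ 2 + snd z ^ 2.

Definition Z2 : Type := (Z * Z)%type.
Definition Z2add (j l : Z2) : Z2 := (fst j + fst l, snd j + snd l)%Z.
Definition knorm (k : Z2) : R := sqrt (IZR (fst k) ^ 2 + IZR (snd k) ^ 2).

(* Unconditional (= absolute, for real/complex series) summation over an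
   arbitrary index type: the net of finite partial sums converges to S. *)
Definition has_sum {T : Type} (f : T -> R) (S : R) : Prop :=
  forall eps, 0 < eps -> exists F0 : list T,
    forall F : list T, NoDup F -> incl F0 F ->
      Rabs (fold_right Rplus 0 (map f F) - S) < eps.

Definition has_sumC {T : Type} (f : T -> Cx) (S : Cx) : Prop :=
  has_sum (fun t => fst (f t)) (fst S) /\ has_sum (fun t => snd (f t)) (snd S).

(* A function eta on [0,2pi]^2 is represented by its Fourier coefficients
   eh : Z2 -> Cx, eta(x) = sum_k eh k e^{i k.x}. *)

Definition gweight (s beta : R) (k : Z2) : R :=
  Rpower (knorm k) (2 * s) * exp (2 * beta * knorm k).

(* Summand of ||Lambda^a eta||_beta^2 / (2pi)^2 for the norm with exponent r:
   |k|^{2(r+a)} e^{2 beta |k|} |eh k|^2 *)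
Definition norm_term (r a beta : R) (eh : Z2 -> Cx) (k : Z2) : R :=
  gweight (r + a) beta k * Cnorm2 (eh k).

(* With u = (-R_2 eta, R_1 eta), the Fourier coefficient of u . grad eta at k is
   sum_{j+l=k} (u^(j) . (i l)) eh l, where
   u^(j) = (-(i j_2/|j|) eh j, (i j_1/|j|) eh j), so that
   u^(j) . (i l) = (j_2 l_1 - j_1 l_2)/|j| * eh j.
   The inner product <u.grad eta, Lambda^{2r} e^{2 beta Lambda} eta>
   = (2pi)^2 sum_k (u.grad eta)^(k) * conj(|k|^{2r} e^{2beta|k|} eh k),
   written as a double sum over pairs (j,l). *)
Definition ip_term (r beta : R) (eh : Z2 -> Cx) (p : Z2 * Z2) : Cx :=
  let j := fst p in let l := snd p in let k := Z2add j l in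
  Cscal ((2 * PI) ^ 2 *
         ((IZR (snd j) * IZR (fst l) - IZR (fst j) * IZR (snd l)) / knorm j)
         * gweight r beta k)
        (Cmul (Cmul (eh j) (eh l)) (Cconj (eh k))).

Definition CW (r : R) : R := / (2 * PI) * ((2 * r - 2) / (2 * r - 3)).

From Stdlib Require Import Reals Lra Lia Psatz ZArith List Classical.
Open Scope R_scope.

(* Written on Fourier coefficients, the inner product is a double sum over pairs (j, l), k = j + l,
   of (2 pi)^2 (cross j l / |j|) |k|^(2r) e^(2 beta |k|) eh_j eh_l conj (eh_k).  Two pointwise facts,
   |cross j l| / |j| <= sqrt (|l| |k|) and |k|^r e^(beta |k|) <= 2^r (|j|^r + |l|^r) e^(beta |j|) e^(beta |l|),
   dominate each summand by two trilinear terms of the form f (j + l) g j m l.  Such a sum is at most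
   (sum m) ||f||_2 ||g||_2 by Cauchy-Schwarz, and sum m is controlled by a further Cauchy-Schwarz against
   the weight |k|^(-r), which is square summable on Z^2 \ {0} because 2 r > 3.  The dominated double
   series then converges absolutely, and C_W(r) 2 pi >= 1 absorbs the numerical constant. *)

Lemma abs_le_sqrt x Y : x ^ 2 <= Y -> Rabs x <= sqrt Y.
Proof. intros H. rewrite <- sqrt_Rsqr_abs, Rsqr_pow2. apply sqrt_le_1_alt; auto. Qed.

Definition lsum {T : Type} (f : T -> R) (F : list T) : R := fold_right Rplus 0 (map f F).

Lemma lsum_nil {T} (f : T -> R) : lsum f nil = 0.
Proof. reflexivity. Qed.

Lemma lsum_cons {T} (f : T -> R) a F : lsum f (a :: F) = f a + lsum f F.
Proof. reflexivity. Qed.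

Lemma lsum_app {T} (f : T -> R) F G : lsum f (F ++ G) = lsum f F + lsum f G.
Proof. induction F as [|a F IH]; simpl; [rewrite lsum_nil; ring|]. rewrite !lsum_cons, IH; ring. Qed.

Lemma lsum_map {T U} (f : U -> R) (g : T -> U) F : lsum f (map g F) = lsum (fun x => f (g x)) F.
Proof. unfold lsum; rewrite map_map; reflexivity. Qed.

Lemma lsum_ext {T} (f g : T -> R) F : (forall x, f x = g x) -> lsum f F = lsum g F.
Proof. intros H; unfold lsum; f_equal; apply map_ext; auto. Qed.

Lemma lsum_add {T} (f g : T -> R) F : lsum (fun x => f x + g x) F = lsum f F + lsum g F.
Proof. induction F as [|a F IH]; rewrite ?lsum_cons, ?lsum_nil; [ring|rewrite IH; ring]. Qed.

Lemma lsum_sub {T} (f g : T -> R) F : lsum (fun x => f x - g x) F = lsum f F - lsum g F.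
Proof. induction F as [|a F IH]; rewrite ?lsum_cons, ?lsum_nil; [ring|rewrite IH; ring]. Qed.

Lemma lsum_scal {T} (f : T -> R) a F : lsum (fun x => a * f x) F = a * lsum f F.
Proof. induction F as [|b F IH]; rewrite ?lsum_cons, ?lsum_nil; [ring|rewrite IH; ring]. Qed.

Lemma lsum_le {T} (f g : T -> R) F : (forall x, f x <= g x) -> lsum f F <= lsum g F.
Proof. intros H; induction F as [|a F IH]; rewrite ?lsum_cons, ?lsum_nil; [lra|specialize (H a); lra]. Qed.

Lemma lsum_nonneg {T} (f : T -> R) F : (forall x, 0 <= f x) -> 0 <= lsum f F.
Proof. intros H; induction F as [|a F IH]; rewrite ?lsum_cons, ?lsum_nil; [lra|specialize (H a); lra]. Qed.

Lemma lsum_incl {T} (f : T -> R) F G :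
  (forall x, 0 <= f x) -> NoDup F -> incl F G -> lsum f F <= lsum f G.
Proof.
  intros Hf; revert G; induction F as [|a F IH]; intros G HN HI.
  - rewrite lsum_nil; apply lsum_nonneg; auto.
  - inversion HN as [|? ? HaF HF]; subst.
    destruct (in_split a G) as [G1 [G2 ->]]; [apply HI; left; auto|].
    assert (HFG : lsum f F <= lsum f (G1 ++ G2)).
    { apply IH; auto. intros x Hx.
      assert (Hx' : In x (G1 ++ a :: G2)) by (apply HI; right; auto).
      apply in_app_or in Hx'; apply in_or_app.
      destruct Hx' as [|[->|]]; auto; contradiction. }
    rewrite lsum_app in HFG. rewrite lsum_cons, lsum_app, lsum_cons. lra.
Qed.

Lemma lsum_list_prod {U V} (f : U -> R) (g : V -> R) F G :
  lsum (fun p => f (fst p) * g (snd p)) (list_prod F G) = lsum f F * lsum g G.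
Proof.
  induction F as [|a F IH]; [cbn [list_prod]; rewrite !lsum_nil; ring|].
  change (list_prod (a :: F) G) with (map (fun y => (a, y)) G ++ list_prod F G).
  rewrite lsum_app, IH, lsum_cons, lsum_map. cbn [fst snd]. rewrite lsum_scal. ring.
Qed.

Lemma lsum_mul_sq_le {T} (a b : T -> R) F :
  lsum (fun x => a x * b x) F ^ 2 <= lsum (fun x => a x ^ 2) F * lsum (fun x => b x ^ 2) F.
Proof.
  induction F as [|y F IH]; rewrite ?lsum_cons, ?lsum_nil; [lra|].
  set (S := lsum (fun x => a x * b x) F) in *.
  set (X := lsum (fun x => a x ^ 2) F) in *.
  set (Y := lsum (fun x => b x ^ 2) F) in *.
  assert (HX : 0 <= X) by (apply lsum_nonneg; intros; apply pow2_ge_0).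
  assert (HY : 0 <= Y) by (apply lsum_nonneg; intros; apply pow2_ge_0).
  assert (Hcross : 2 * S * (a y * b y) <= X * b y ^ 2 + Y * a y ^ 2).
  { set (u := 2 * S * (a y * b y)). set (v := X * b y ^ 2 + Y * a y ^ 2).
    assert (Hv : 0 <= v) by (unfold v; pose proof (pow2_ge_0 (a y)); pose proof (pow2_ge_0 (b y)); nra).
    assert (Hu2 : u ^ 2 <= 4 * (X * Y) * (a y * b y) ^ 2).
    { unfold u. pose proof (pow2_ge_0 (a y * b y)). nra. }
    assert (Hv2 : 4 * (X * Y) * (a y * b y) ^ 2 <= v ^ 2).
    { unfold v. pose proof (pow2_ge_0 (X * b y ^ 2 - Y * a y ^ 2)). nra. }
    nra. }
  nra.
Qed.

Definition sums_bounded {T : Type} (f : T -> R) (M : R) : Prop :=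
  forall F, NoDup F -> lsum f F <= M.

Lemma sums_bounded_ge0 {T} (f : T -> R) M : sums_bounded f M -> 0 <= M.
Proof. intros H. exact (H nil (NoDup_nil _)). Qed.

Lemma sums_bounded_le_fun {T} (f g : T -> R) M :
  (forall x, f x <= g x) -> sums_bounded g M -> sums_bounded f M.
Proof. intros H Hg F HF. eapply Rle_trans; [apply lsum_le; eauto | auto]. Qed.

Lemma sums_bounded_weaken {T} (f : T -> R) M M' : M <= M' -> sums_bounded f M -> sums_bounded f M'.
Proof. intros H Hf F HF. specialize (Hf F HF). lra. Qed.

Lemma sums_bounded_add {T} (f g : T -> R) M1 M2 :
  sums_bounded f M1 -> sums_bounded g M2 -> sums_bounded (fun x => f x + g x) (M1 + M2).
Proof. intros H1 H2 F HF. rewrite lsum_add. specialize (H1 F HF); specialize (H2 F HF). lra. Qed.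

Lemma sums_bounded_scal {T} (f : T -> R) a M :
  0 <= a -> sums_bounded f M -> sums_bounded (fun x => a * f x) (a * M).
Proof. intros Ha H F HF. rewrite lsum_scal. apply Rmult_le_compat_l; auto. Qed.

Lemma sums_bounded_comp_inj {T U} (f : U -> R) (phi : T -> U) M :
  (forall x y, phi x = phi y -> x = y) -> sums_bounded f M -> sums_bounded (fun x => f (phi x)) M.
Proof.
  intros Hphi Hf F HF. rewrite <- lsum_map. apply Hf.
  apply NoDup_map_NoDup_ForallPairs; auto. intros x y _ _; auto.
Qed.

Lemma sums_bounded_mul_inj {T U V}
  (decU : forall x y : U, {x = y} + {x <> y}) (decV : forall x y : V, {x = y} + {x <> y})
  (f : U -> R) (g : V -> R) (phi : T -> U * V) M1 M2 :
  (forall x, 0 <= f x) -> (forall y, 0 <= g y) -> (forall x y, phi x = phi y -> x = y) ->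
  sums_bounded f M1 -> sums_bounded g M2 ->
  sums_bounded (fun x => f (fst (phi x)) * g (snd (phi x))) (M1 * M2).
Proof.
  intros Hf Hg Hphi H1 H2.
  apply (sums_bounded_comp_inj (fun p => f (fst p) * g (snd p))); auto.
  intros F HF.
  set (F1 := nodup decU (map fst F)). set (F2 := nodup decV (map snd F)).
  apply Rle_trans with (lsum (fun p => f (fst p) * g (snd p)) (list_prod F1 F2)).
  - apply lsum_incl; auto.
    + intros; apply Rmult_le_pos; auto.
    + intros [u v] Hp. apply in_prod; apply nodup_In.
      * change u with (fst (u, v)); apply in_map; auto.
      * change v with (snd (u, v)); apply in_map; auto.
  - rewrite lsum_list_prod.
    pose proof (lsum_nonneg f F1 Hf). pose proof (lsum_nonneg g F2 Hg).
    pose proof (H1 F1 (NoDup_nodup _ _)). pose proof (H2 F2 (NoDup_nodup _ _)).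
    apply Rmult_le_compat; auto.
Qed.

Lemma sums_bounded_mul {T} (a b : T -> R) A B :
  sums_bounded (fun x => a x ^ 2) A -> sums_bounded (fun x => b x ^ 2) B ->
  sums_bounded (fun x => a x * b x) (sqrt (A * B)).
Proof.
  intros HA HB F HF.
  pose proof (lsum_nonneg (fun x => a x ^ 2) F (fun x => pow2_ge_0 (a x))).
  pose proof (lsum_nonneg (fun x => b x ^ 2) F (fun x => pow2_ge_0 (b x))).
  pose proof (HA F HF). pose proof (HB F HF).
  apply Rle_trans with (Rabs (lsum (fun x => a x * b x) F)); [apply Rle_abs|].
  apply abs_le_sqrt. eapply Rle_trans; [apply lsum_mul_sq_le|].
  apply Rmult_le_compat; auto.
Qed.

Lemma fst_le_Cmod z : Rabs (fst z) <= Cmod z.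
Proof. apply abs_le_sqrt. pose proof (pow2_ge_0 (snd z)). lra. Qed.

Lemma snd_le_Cmod z : Rabs (snd z) <= Cmod z.
Proof. apply abs_le_sqrt. pose proof (pow2_ge_0 (fst z)). lra. Qed.

Lemma has_sum_sums_bounded {T} (dec : forall x y : T, {x = y} + {x <> y}) (f : T -> R) S :
  (forall x, 0 <= f x) -> has_sum f S -> sums_bounded f S.
Proof.
  intros Hf HS F HF. destruct (Rle_or_lt (lsum f F) S) as [|Hlt]; auto.
  exfalso. destruct (HS (lsum f F - S)) as [F0 H0]; [lra|].
  set (G := nodup dec (F ++ F0)).
  assert (HFG : incl F G) by (intros x Hx; apply nodup_In, in_or_app; auto).
  assert (HF0G : incl F0 G) by (intros x Hx; apply nodup_In, in_or_app; auto).
  specialize (H0 G (NoDup_nodup _ _) HF0G).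
  pose proof (lsum_incl f F G Hf HF HFG).
  apply Rabs_def2 in H0. unfold lsum in *. lra.
Qed.

Lemma has_sum_of_sums_bounded {T} (f : T -> R) M :
  (forall x, 0 <= f x) -> sums_bounded f M -> exists S, has_sum f S /\ 0 <= S <= M.
Proof.
  intros Hf HM.
  set (E := fun x => exists F, NoDup F /\ x = lsum f F).
  destruct (completeness E) as [S [Hub Hlub]].
  - exists M. intros x [F [HF ->]]. apply HM; auto.
  - exists 0, nil. split; [constructor | reflexivity].
  - exists S. split; [|split].
    + intros eps Heps.
      destruct (classic (exists F0, NoDup F0 /\ S - eps < lsum f F0)) as [[F0 [HN0 HF0]]|Hno].
      * exists F0. intros F HF HI.
        pose proof (lsum_incl f F0 F Hf HN0 HI).
        assert (lsum f F <= S) by (apply Hub; exists F; auto).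
        unfold lsum in *. apply Rabs_def1; lra.
      * exfalso. assert (S <= S - eps); [|lra].
        apply Hlub. intros x [F [HF ->]].
        destruct (Rle_or_lt (lsum f F) (S - eps)); auto.
        exfalso; apply Hno; eauto.
    + apply Hub. exists nil. split; [constructor | reflexivity].
    + apply Hlub. intros x [F [HF ->]]; apply HM; auto.
Qed.

Lemma has_sum_ext {T} (f g : T -> R) S : (forall x, f x = g x) -> has_sum f S -> has_sum g S.
Proof.
  intros He H eps Heps. destruct (H eps Heps) as [F0 H0]. exists F0. intros F HF HI.
  change (fold_right Rplus 0 (map g F)) with (lsum g F).
  rewrite <- (lsum_ext f g F He). exact (H0 F HF HI).
Qed.

Lemma has_sum_sub {T} (f g : T -> R) a b :
  has_sum f a -> has_sum g b -> has_sum (fun x => f x - g x) (a - b).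
Proof.
  intros Ha Hb eps He. destruct (Ha (eps / 2)) as [F1 H1]; [lra|].
  destruct (Hb (eps / 2)) as [F2 H2]; [lra|]. exists (F1 ++ F2). intros F HF HI.
  assert (HI1 : incl F1 F) by (intros x Hx; apply HI, in_or_app; auto).
  assert (HI2 : incl F2 F) by (intros x Hx; apply HI, in_or_app; auto).
  specialize (H1 F HF HI1); specialize (H2 F HF HI2).
  change (fold_right Rplus 0 (map (fun x => f x - g x) F)) with (lsum (fun x => f x - g x) F).
  rewrite lsum_sub. unfold lsum.
  apply Rabs_def2 in H1; apply Rabs_def2 in H2. apply Rabs_def1; lra.
Qed.

Lemma has_sum_of_dominated {T} (f g : T -> R) M :
  (forall x, Rabs (f x) <= g x) -> sums_bounded g M -> exists S, has_sum f S /\ Rabs S <= M.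
Proof.
  intros Hfg HM.
  destruct (has_sum_of_sums_bounded (fun x => Rmax (f x) 0) M) as [Sp [Hp HpM]].
  { intros; apply Rmax_r. }
  { apply sums_bounded_le_fun with g; auto. intros x. specialize (Hfg x).
    apply Rmax_lub; [pose proof (Rle_abs (f x)) | pose proof (Rabs_pos (f x))]; lra. }
  destruct (has_sum_of_sums_bounded (fun x => Rmax (- f x) 0) M) as [Sm [Hm HmM]].
  { intros; apply Rmax_r. }
  { apply sums_bounded_le_fun with g; auto. intros x. specialize (Hfg x).
    apply Rmax_lub; [pose proof (Rle_abs (- f x)); rewrite Rabs_Ropp in * | pose proof (Rabs_pos (f x))]; lra. }
  exists (Sp - Sm). split.
  - eapply has_sum_ext; [|exact (has_sum_sub _ _ _ _ Hp Hm)].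
    intros x; unfold Rmax. destruct (Rle_dec (f x) 0), (Rle_dec (- f x) 0); lra.
  - apply Rabs_le; lra.
Qed.

Lemma Cmod_le_abs_add z : Cmod z <= Rabs (fst z) + Rabs (snd z).
Proof.
  destruct z as [x y]; unfold Cmod; cbn [fst snd].
  pose proof (Rabs_pos x). pose proof (Rabs_pos y).
  rewrite <- (sqrt_pow2 (Rabs x + Rabs y)) by lra. apply sqrt_le_1_alt.
  rewrite <- (pow2_abs x), <- (pow2_abs y). nra.
Qed.

Lemma has_sumC_of_dominated {T} (f : T -> Cx) (g : T -> R) M :
  (forall x, Cmod (f x) <= g x) -> sums_bounded g M -> exists S, has_sumC f S /\ Cmod S <= 2 * M.
Proof.
  intros Hfg HM.
  destruct (has_sum_of_dominated (fun x => fst (f x)) g M) as [S1 [H1 HS1]]; auto.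
  { intros x. eapply Rle_trans; [apply fst_le_Cmod | apply Hfg]. }
  destruct (has_sum_of_dominated (fun x => snd (f x)) g M) as [S2 [H2 HS2]]; auto.
  { intros x. eapply Rle_trans; [apply snd_le_Cmod | apply Hfg]. }
  exists (S1, S2). split; [split; auto|].
  eapply Rle_trans; [apply Cmod_le_abs_add|]. cbn [fst snd]. lra.
Qed.

Lemma Z2_eq_dec : forall j l : Z2, {j = l} + {j <> l}.
Proof. intros [a b] [c d]. destruct (Z.eq_dec a c), (Z.eq_dec b d); subst; auto; right; congruence. Qed.

Lemma knorm_nonneg k : 0 <= knorm k.
Proof. apply sqrt_pos. Qed.

Lemma knorm_sq k : knorm k ^ 2 = IZR (fst k) ^ 2 + IZR (snd k) ^ 2.
Proof. apply pow2_sqrt. pose proof (pow2_ge_0 (IZR (fst k))); pose proof (pow2_ge_0 (IZR (snd k))); lra. Qed.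

Lemma IZR_sq_ge1 z : z <> 0%Z -> 1 <= IZR z ^ 2.
Proof.
  intros Hz. replace (IZR z ^ 2) with (IZR (z * z)) by (rewrite mult_IZR; ring).
  apply IZR_le. nia.
Qed.

Lemma knorm_ge1 k : k <> (0%Z, 0%Z) -> 1 <= knorm k.
Proof.
  intros Hk. rewrite <- sqrt_1. apply sqrt_le_1_alt.
  pose proof (pow2_ge_0 (IZR (fst k))); pose proof (pow2_ge_0 (IZR (snd k))).
  destruct (Z.eq_dec (fst k) 0) as [Ha|Ha]; [destruct (Z.eq_dec (snd k) 0) as [Hb|Hb]|].
  - destruct k; cbn in *; subst; congruence.
  - pose proof (IZR_sq_ge1 _ Hb); lra.
  - pose proof (IZR_sq_ge1 _ Ha); lra.
Qed.

Lemma Rabs_IZR_fst_le_knorm k : Rabs (IZR (fst k)) <= knorm k.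
Proof. apply abs_le_sqrt. pose proof (pow2_ge_0 (IZR (snd k))); lra. Qed.

Lemma Rabs_IZR_snd_le_knorm k : Rabs (IZR (snd k)) <= knorm k.
Proof. apply abs_le_sqrt. pose proof (pow2_ge_0 (IZR (fst k))); lra. Qed.

Definition dot (j l : Z2) : R := IZR (fst j) * IZR (fst l) + IZR (snd j) * IZR (snd l).
Definition cross (j l : Z2) : R := IZR (snd j) * IZR (fst l) - IZR (fst j) * IZR (snd l).

Lemma dot_sq_add_cross_sq j l : dot j l ^ 2 + cross j l ^ 2 = knorm j ^ 2 * knorm l ^ 2.
Proof. rewrite !knorm_sq. unfold dot, cross. ring. Qed.

Lemma Rabs_le_knorm_mul x j l : x ^ 2 <= knorm j ^ 2 * knorm l ^ 2 -> Rabs x <= knorm j * knorm l.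
Proof.
  intros H. rewrite <- (sqrt_pow2 (knorm j * knorm l)) by (apply Rmult_le_pos; apply knorm_nonneg).
  apply abs_le_sqrt. rewrite Rpow_mult_distr. exact H.
Qed.

Lemma Rabs_dot_le j l : Rabs (dot j l) <= knorm j * knorm l.
Proof. apply Rabs_le_knorm_mul. rewrite <- dot_sq_add_cross_sq. pose proof (pow2_ge_0 (cross j l)); lra. Qed.

Lemma Rabs_cross_le j l : Rabs (cross j l) <= knorm j * knorm l.
Proof. apply Rabs_le_knorm_mul. rewrite <- dot_sq_add_cross_sq. pose proof (pow2_ge_0 (dot j l)); lra. Qed.

Lemma knorm_add_le j l : knorm (Z2add j l) <= knorm j + knorm l.
Proof.
  pose proof (knorm_nonneg j); pose proof (knorm_nonneg l).
  unfold knorm at 1. rewrite <- (sqrt_pow2 (knorm j + knorm l)) by lra.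
  apply sqrt_le_1_alt.
  assert (E : IZR (fst (Z2add j l)) ^ 2 + IZR (snd (Z2add j l)) ^ 2
              = knorm j ^ 2 + 2 * dot j l + knorm l ^ 2).
  { rewrite !knorm_sq. unfold dot, Z2add; cbn [fst snd]. rewrite !plus_IZR. ring. }
  rewrite E. pose proof (Rle_abs (dot j l)); pose proof (Rabs_dot_le j l). nra.
Qed.

(* [cross j l = cross j (j + l)], so both [|l|] and [|j + l|] bound [|cross j l| / |j|]. *)
Lemma cross_div_knorm_le j l : j <> (0%Z, 0%Z) ->
  Rabs (cross j l) / knorm j <= sqrt (knorm l) * sqrt (knorm (Z2add j l)).
Proof.
  intros Hj. pose proof (knorm_ge1 j Hj) as Hj1. pose proof (knorm_nonneg l).
  pose proof (knorm_nonneg (Z2add j l)).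
  assert (Hcross : cross j l = cross j (Z2add j l))
    by (unfold cross, Z2add; cbn [fst snd]; rewrite !plus_IZR; ring).
  pose proof (Rabs_cross_le j l) as Hc1. pose proof (Rabs_cross_le j (Z2add j l)) as Hc2.
  rewrite <- Hcross in Hc2. pose proof (Rabs_pos (cross j l)).
  rewrite <- sqrt_mult by lra.
  unfold Rdiv. rewrite <- (Rabs_pos_eq (/ knorm j)) by (left; apply Rinv_0_lt_compat; lra).
  rewrite <- Rabs_mult. apply abs_le_sqrt.
  rewrite Rpow_mult_distr, pow_inv.
  apply Rmult_le_reg_r with (knorm j ^ 2); [nra|].
  rewrite Rmult_assoc, Rinv_l, Rmult_1_r by nra.
  assert (Hsq : cross j l ^ 2 = Rabs (cross j l) * Rabs (cross j l)) by (rewrite <- pow2_abs; ring).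
  rewrite Hsq. nra.
Qed.

Definition decay32 (a : Z) : R := / ((1 + Rabs (IZR a)) * sqrt (1 + Rabs (IZR a))).

Lemma decay32_pos a : 0 < decay32 a.
Proof.
  unfold decay32. pose proof (Rabs_pos (IZR a)). apply Rinv_0_lt_compat.
  apply Rmult_lt_0_compat; [lra | apply sqrt_lt_R0; lra].
Qed.

Lemma decay32_opp a : decay32 (- a) = decay32 a.
Proof. unfold decay32. rewrite opp_IZR, Rabs_Ropp. reflexivity. Qed.

Lemma decay32_of_nat n : decay32 (Z.of_nat n) = / ((1 + INR n) * sqrt (1 + INR n)).
Proof. unfold decay32. rewrite <- INR_IZR_INZ, Rabs_pos_eq by apply pos_INR. reflexivity. Qed.

Lemma inv_pow32_le_telescope x : 2 <= x -> / (x * sqrt x) <= 2 / sqrt (x - 1) - 2 / sqrt x.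
Proof.
  intros Hx. set (s := sqrt x). set (t := sqrt (x - 1)).
  assert (Hs : 0 < s) by (apply sqrt_lt_R0; lra). assert (Ht : 0 < t) by (apply sqrt_lt_R0; lra).
  assert (Hs2 : s * s = x) by (apply sqrt_sqrt; lra).
  assert (Ht2 : t * t = x - 1) by (apply sqrt_sqrt; lra).
  assert (Hts : t <= s) by (apply sqrt_le_1_alt; lra).
  assert (Hnum : 0 <= 2 * s * s * s - 2 * s * s * t - t).
  { replace (2 * s * s * s - 2 * s * s * t - t)
      with ((s - t) * (2 * s * s - t * s - t * t) + t * ((s - t) * (s + t) - 1)) by ring.
    replace ((s - t) * (s + t) - 1) with 0 by lra. rewrite Rmult_0_r, Rplus_0_r.
    apply Rmult_le_pos; nra. }
  replace (2 / t - 2 / s) with (/ (s * s * s) + (2 * s * s * s - 2 * s * s * t - t) / (s * s * s * t))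
    by (field; lra).
  replace (x * s) with (s * s * s) by (rewrite <- Hs2; ring).
  assert (0 <= (2 * s * s * s - 2 * s * s * t - t) / (s * s * s * t))
    by (apply Rmult_le_pos; [lra | left; apply Rinv_0_lt_compat; repeat apply Rmult_lt_0_compat; lra]).
  lra.
Qed.

Lemma lsum_inv_pow32_seq_le M :
  lsum (fun n => / ((1 + INR n) * sqrt (1 + INR n))) (seq 0 (S M)) <= 3 - 2 / sqrt (INR M + 1).
Proof.
  induction M as [|M IH].
  - cbn [seq]. rewrite lsum_cons, lsum_nil. cbn [INR]. replace (1 + 0) with 1 by ring. replace (0 + 1) with 1 by ring.
    rewrite sqrt_1. lra.
  - rewrite seq_S, lsum_app, lsum_cons, lsum_nil, S_INR.
    pose proof (inv_pow32_le_telescope (INR M + 1 + 1)) as Htel. pose proof (pos_INR M).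
    replace (INR M + 1 + 1 - 1) with (INR M + 1) in Htel by ring.
    replace (1 + INR (0 + S M)) with (INR M + 1 + 1) by (rewrite plus_O_n, S_INR; ring). lra.
Qed.

Lemma sums_bounded_decay32 : sums_bounded decay32 6.
Proof.
  intros L HL.
  set (M := fold_right (fun a m => Nat.max (Z.abs_nat a) m) 0%nat L).
  assert (HM : forall a, In a L -> (Z.abs_nat a <= M)%nat).
  { unfold M; clear HL. induction L as [|b L IH]; intros a Ha; [destruct Ha|].
    destruct Ha as [->|Ha]; cbn; [lia|]. specialize (IH a Ha). lia. }
  set (Nat := seq 0 (S M)).
  apply Rle_trans with (lsum decay32 (map Z.of_nat Nat ++ map (fun n => (- Z.of_nat n)%Z) Nat)).
  - apply lsum_incl; auto; [intros; left; apply decay32_pos|].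
    intros a Ha. specialize (HM a Ha). apply in_or_app.
    destruct (Z_le_gt_dec 0 a).
    + left. replace a with (Z.of_nat (Z.abs_nat a)) by lia. apply in_map, in_seq. lia.
    + right. replace a with (- Z.of_nat (Z.abs_nat a))%Z by lia.
      apply (in_map (fun n => (- Z.of_nat n)%Z)), in_seq. lia.
  - rewrite lsum_app, !lsum_map.
    rewrite (lsum_ext (fun n => decay32 (- Z.of_nat n)) (fun n => decay32 (Z.of_nat n)))
      by (intros; apply decay32_opp).
    rewrite (lsum_ext _ _ _ decay32_of_nat).
    pose proof (lsum_inv_pow32_seq_le M).
    assert (0 <= 2 / sqrt (INR M + 1)).
    { apply Rmult_le_pos; [lra | left; apply Rinv_0_lt_compat, sqrt_lt_R0].
      pose proof (pos_INR M); lra. }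
    unfold Nat. lra.
Qed.

Definition negpow (r : R) (k : Z2) : R :=
  if Z2_eq_dec k (0%Z, 0%Z) then 0 else Rpower (knorm k) (- r).

Lemma negpow_nonneg r k : 0 <= negpow r k.
Proof. unfold negpow. destruct (Z2_eq_dec _ _); [lra | left; apply exp_pos]. Qed.

(* [|k|^(-2r) <= |k|^(-3) <= 8 ((1 + |k1|) (1 + |k2|))^(-3/2)], a product of two summable factors. *)
Lemma negpow_sq_le r k : 3 / 2 < r -> negpow r k ^ 2 <= 8 * (decay32 (fst k) * decay32 (snd k)).
Proof.
  intros Hr. pose proof (decay32_pos (fst k)). pose proof (decay32_pos (snd k)).
  unfold negpow. destruct (Z2_eq_dec k (0%Z, 0%Z)) as [_|Hk]; [nra|].
  pose proof (knorm_ge1 k Hk) as Hn. set (n := knorm k) in *.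
  replace (Rpower n (- r) ^ 2) with (Rpower n (- r + - r)) by (rewrite Rpower_plus; ring).
  apply Rle_trans with (Rpower n (- INR 3)); [apply Rle_Rpower; auto; simpl; lra|].
  rewrite Rpower_Ropp, Rpower_pow by lra.
  unfold decay32. set (a := Rabs (IZR (fst k))). set (b := Rabs (IZR (snd k))).
  assert (Ha : 0 <= a) by apply Rabs_pos. assert (Hb : 0 <= b) by apply Rabs_pos.
  assert (Han : a <= n) by apply Rabs_IZR_fst_le_knorm.
  assert (Hbn : b <= n) by apply Rabs_IZR_snd_le_knorm.
  set (p := (1 + a) * (1 + b)).
  assert (Hp : 1 <= p) by (unfold p; nra).
  assert (Hsp : sqrt p <= 2 * n).
  { rewrite <- (sqrt_pow2 (2 * n)) by lra. apply sqrt_le_1_alt. unfold p; nra. }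
  assert (Hsp1 : 0 < sqrt p) by (apply sqrt_lt_R0; lra).
  replace (8 * (/ ((1 + a) * sqrt (1 + a)) * / ((1 + b) * sqrt (1 + b)))) with (/ (p * sqrt p / 8)).
  2:{ unfold p. rewrite sqrt_mult by lra.
      assert (0 < sqrt (1 + a)) by (apply sqrt_lt_R0; lra).
      assert (0 < sqrt (1 + b)) by (apply sqrt_lt_R0; lra).
      field; repeat split; lra. }
  apply Rinv_le_contravar; [apply Rdiv_lt_0_compat; nra|].
  assert (p <= 4 * n ^ 2) by (unfold p; nra).
  assert (p * sqrt p <= 4 * n ^ 2 * (2 * n)) by (apply Rmult_le_compat; lra).
  simpl. lra.
Qed.

Lemma sums_bounded_negpow_sq r : 3 / 2 < r -> sums_bounded (fun k => negpow r k ^ 2) 288.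
Proof.
  intros Hr. apply sums_bounded_le_fun with (fun k => 8 * (decay32 (fst k) * decay32 (snd k))).
  { intros; apply negpow_sq_le; auto. }
  replace 288 with (8 * (6 * 6)) by ring. apply sums_bounded_scal; [lra|].
  apply (sums_bounded_mul_inj Z.eq_dec Z.eq_dec decay32 decay32 (fun k : Z2 => k));
    auto using sums_bounded_decay32; intros; left; apply decay32_pos.
Qed.

Lemma Cmod_sq z : Cmod z ^ 2 = Cnorm2 z.
Proof. apply pow2_sqrt. pose proof (pow2_ge_0 (fst z)); pose proof (pow2_ge_0 (snd z)). unfold Cnorm2; lra. Qed.

Lemma Cmod_Cmul z w : Cmod (Cmul z w) = Cmod z * Cmod w.
Proof.
  destruct z as [a b], w as [c d]; unfold Cmod, Cmul; cbn [fst snd].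
  rewrite <- sqrt_mult by nra. f_equal; ring.
Qed.

Lemma Cmod_Cconj z : Cmod (Cconj z) = Cmod z.
Proof. destruct z; unfold Cmod, Cconj; cbn [fst snd]. f_equal; ring. Qed.

Lemma Cmod_Cscal a z : Cmod (Cscal a z) = Rabs a * Cmod z.
Proof.
  destruct z as [x y]; unfold Cmod, Cscal; cbn [fst snd].
  rewrite <- sqrt_Rsqr_abs, <- sqrt_mult by (try apply Rle_0_sqr; nra). f_equal. unfold Rsqr; ring.
Qed.

(* [gev s beta eh k] is the modulus of the [k]-th Fourier coefficient of [Lambda^s e^(beta Lambda) eta].
   Beware that [Rpower 0 s = 1]: the zero mode has to be killed by [eh (0, 0) = (0, 0)]. *)
Definition gev (s beta : R) (eh : Z2 -> Cx) (k : Z2) : R :=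
  Rpower (knorm k) s * exp (beta * knorm k) * Cmod (eh k).

Lemma gev_nonneg s beta eh k : 0 <= gev s beta eh k.
Proof.
  unfold gev. pose proof (exp_pos (s * ln (knorm k))). pose proof (exp_pos (beta * knorm k)).
  pose proof (sqrt_pos (Cnorm2 (eh k))). unfold Rpower, Cmod. apply Rmult_le_pos; [nra | auto].
Qed.

Lemma gweight_eq_sq s beta k : gweight s beta k = (Rpower (knorm k) s * exp (beta * knorm k)) ^ 2.
Proof.
  unfold gweight. replace (2 * s) with (s + s) by ring.
  replace (2 * beta * knorm k) with (beta * knorm k + beta * knorm k) by ring.
  rewrite Rpower_plus, exp_plus. ring.
Qed.

Lemma norm_term_eq_gev_sq r a beta eh k : norm_term r a beta eh k = gev (r + a) beta eh k ^ 2.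
Proof. unfold norm_term, gev. rewrite gweight_eq_sq, <- Cmod_sq. ring. Qed.

Lemma gev_le_gev_add s a beta eh k : eh (0%Z, 0%Z) = (0, 0) -> 0 <= a ->
  gev s beta eh k <= gev (s + a) beta eh k.
Proof.
  intros H0 Ha. destruct (Z2_eq_dec k (0%Z, 0%Z)) as [->|Hk].
  - unfold gev. rewrite H0. unfold Cmod; cbn [fst snd].
    replace (0 ^ 2 + 0 ^ 2) with 0 by ring. rewrite sqrt_0. lra.
  - unfold gev. pose proof (exp_pos (beta * knorm k)). pose proof (sqrt_pos (Cnorm2 (eh k))).
    apply Rmult_le_compat_r; [exact H1|]. apply Rmult_le_compat_r; [lra|].
    apply Rle_Rpower; [apply knorm_ge1; auto | lra].
Qed.

Lemma norm_term_le_shift r beta eh k : eh (0%Z, 0%Z) = (0, 0) ->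
  norm_term r 0 beta eh k <= norm_term r (1/2) beta eh k.
Proof.
  intros H0. rewrite !norm_term_eq_gev_sq, Rplus_0_r.
  apply pow_incr. split; [apply gev_nonneg | apply gev_le_gev_add; auto; lra].
Qed.

Lemma Rpower_le_of_le_add x a b r : 0 <= r -> 0 < x -> 0 < a -> 0 < b -> x <= a + b ->
  Rpower x r <= Rpower 2 r * (Rpower a r + Rpower b r).
Proof.
  intros Hr Hx Ha Hb Hxab.
  pose proof (exp_pos (r * ln a)); pose proof (exp_pos (r * ln b)); pose proof (exp_pos (r * ln 2)).
  unfold Rpower in *.
  destruct (Rle_or_lt a b) as [Hab|Hab].
  - apply Rle_trans with (Rpower (2 * b) r); [apply Rle_Rpower_l; auto; lra|].
    rewrite <- Rpower_mult_distr by lra. unfold Rpower. nra.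
  - apply Rle_trans with (Rpower (2 * a) r); [apply Rle_Rpower_l; auto; lra|].
    rewrite <- Rpower_mult_distr by lra. unfold Rpower. nra.
Qed.

Lemma gevrey_factor_add_le r beta j l : 0 <= r -> 0 <= beta ->
  j <> (0%Z, 0%Z) -> l <> (0%Z, 0%Z) -> Z2add j l <> (0%Z, 0%Z) ->
  Rpower (knorm (Z2add j l)) r * exp (beta * knorm (Z2add j l))
  <= Rpower 2 r * (Rpower (knorm j) r + Rpower (knorm l) r) * (exp (beta * knorm j) * exp (beta * knorm l)).
Proof.
  intros Hr Hbeta Hj Hl Hk.
  pose proof (knorm_ge1 _ Hj); pose proof (knorm_ge1 _ Hl); pose proof (knorm_ge1 _ Hk).
  pose proof (knorm_add_le j l).
  apply Rmult_le_compat; try (left; apply exp_pos).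
  - apply Rpower_le_of_le_add; auto; lra.
  - rewrite <- exp_plus.
    assert (Hle : beta * knorm (Z2add j l) <= beta * knorm j + beta * knorm l) by nra.
    destruct Hle as [Hlt|Heq]; [left; apply exp_increasing; auto | right; rewrite Heq; reflexivity].
Qed.

Definition majorant (r beta : R) (eh : Z2 -> Cx) (p : Z2 * Z2) : R :=
  let j := fst p in let l := snd p in let k := Z2add j l in
  (2 * PI) ^ 2 * Rpower 2 r *
  (gev (r + 1/2) beta eh k * gev r beta eh j * (gev (r + 1/2) beta eh l * negpow r l)
   + gev (r + 1/2) beta eh k * (gev r beta eh j * negpow r j) * gev (r + 1/2) beta eh l).

Lemma majorant_nonneg r beta eh p : 0 <= majorant r beta eh p.
Proof.
  unfold majorant. pose proof PI_RGT_0. pose proof (exp_pos (r * ln 2)).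
  pose proof (gev_nonneg (r + 1/2) beta eh (Z2add (fst p) (snd p))).
  pose proof (gev_nonneg (r + 1/2) beta eh (snd p)). pose proof (gev_nonneg r beta eh (fst p)).
  pose proof (negpow_nonneg r (fst p)). pose proof (negpow_nonneg r (snd p)).
  apply Rmult_le_pos; [apply Rmult_le_pos; [apply pow_le; lra | left; auto]|].
  apply Rplus_le_le_0_compat; repeat first [assumption | apply Rmult_le_pos].
Qed.

(* The factor [|k|^r] of the weight is split as [2^r (|j|^r + |l|^r)]; the two halves give the two
   terms of [majorant]. *)
Lemma trilinear_term_le r beta eh j l : 0 <= r -> 0 <= beta ->
  j <> (0%Z, 0%Z) -> l <> (0%Z, 0%Z) -> Z2add j l <> (0%Z, 0%Z) ->
  (2 * PI) ^ 2 * (Rabs (cross j l) / knorm j) * gweight r beta (Z2add j l)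
    * (Cmod (eh j) * Cmod (eh l) * Cmod (eh (Z2add j l)))
  <= majorant r beta eh (j, l).
Proof.
  intros Hr Hbeta Hj Hl Hk. unfold majorant, negpow, gev; cbn [fst snd].
  destruct (Z2_eq_dec j (0%Z, 0%Z)) as [|_]; [congruence|].
  destruct (Z2_eq_dec l (0%Z, 0%Z)) as [|_]; [congruence|].
  pose proof (cross_div_knorm_le j l Hj) as Hcross.
  pose proof (gevrey_factor_add_le r beta j l Hr Hbeta Hj Hl Hk) as Hgrowth.
  rewrite gweight_eq_sq.
  pose proof (knorm_ge1 j Hj); pose proof (knorm_ge1 l Hl); pose proof (knorm_ge1 _ Hk).
  set (k := Z2add j l) in *.
  rewrite !Rpower_plus. replace (1/2) with (/2) by field. rewrite !Rpower_sqrt by lra.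
  set (Xj := Rpower (knorm j) r) in *. set (Xl := Rpower (knorm l) r) in *.
  set (Xk := Rpower (knorm k) r) in *.
  set (Ej := exp (beta * knorm j)) in *. set (El := exp (beta * knorm l)) in *.
  set (Ek := exp (beta * knorm k)) in *.
  set (c := Rabs (cross j l) / knorm j) in *.
  assert (Hwj : Rpower (knorm j) (- r) = / Xj) by (unfold Xj; rewrite Rpower_Ropp; reflexivity).
  assert (Hwl : Rpower (knorm l) (- r) = / Xl) by (unfold Xl; rewrite Rpower_Ropp; reflexivity).
  rewrite Hwj, Hwl.
  set (h := Cmod (eh j) * Cmod (eh l) * Cmod (eh k)).
  assert (HXl : 0 < Xl) by apply exp_pos. assert (HXj : 0 < Xj) by apply exp_pos.
  assert (HXk : 0 < Xk) by apply exp_pos. assert (HEk : 0 < Ek) by apply exp_pos.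
  assert (Hh : 0 <= h) by (unfold h, Cmod; repeat apply Rmult_le_pos; apply sqrt_pos).
  assert (Hc : 0 <= c) by (apply Rmult_le_pos; [apply Rabs_pos | left; apply Rinv_0_lt_compat; lra]).
  assert (H2pi : 0 <= (2 * PI) ^ 2) by (apply pow_le; pose proof PI_RGT_0; lra).
  transitivity ((2 * PI) ^ 2 * (c * (Xk * Ek * h) * (Xk * Ek))); [right; unfold h; ring|].
  transitivity ((2 * PI) ^ 2 * ((sqrt (knorm l) * sqrt (knorm k)) * (Xk * Ek * h)
                               * (Rpower 2 r * (Xj + Xl) * (Ej * El)))).
  { assert (HXEh : 0 <= Xk * Ek * h) by (apply Rmult_le_pos; [nra | exact Hh]).
    apply Rmult_le_compat_l; auto.
    apply Rmult_le_compat; [apply Rmult_le_pos; auto | nra | apply Rmult_le_compat_r; auto | auto]. }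
  right. unfold h. field. lra.
Qed.

Lemma Cmod_ip_term r beta eh j l :
  Cmod (ip_term r beta eh (j, l))
  = (2 * PI) ^ 2 * (Rabs (cross j l) / knorm j) * gweight r beta (Z2add j l)
    * (Cmod (eh j) * Cmod (eh l) * Cmod (eh (Z2add j l))).
Proof.
  unfold ip_term; cbn [fst snd]. rewrite Cmod_Cscal, !Cmod_Cmul, Cmod_Cconj.
  assert (Hg : 0 <= gweight r beta (Z2add j l)) by (rewrite gweight_eq_sq; apply pow2_ge_0).
  rewrite !Rabs_mult, (Rabs_pos_eq ((2 * PI) ^ 2)), (Rabs_pos_eq (gweight _ _ _)) by
    (auto; apply pow_le; pose proof PI_RGT_0; lra).
  unfold Rdiv. rewrite Rabs_mult, (Rabs_pos_eq (/ knorm j)).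
  - unfold cross. ring.
  - destruct (Req_dec (knorm j) 0) as [->|Hj]; [rewrite Rinv_0; lra|].
    left; apply Rinv_0_lt_compat. pose proof (knorm_nonneg j); lra.
Qed.

Lemma Cmod_ip_term_le r beta eh p : 0 <= r -> 0 <= beta -> eh (0%Z, 0%Z) = (0, 0) ->
  Cmod (ip_term r beta eh p) <= majorant r beta eh p.
Proof.
  intros Hr Hbeta H0. destruct p as [j l]. rewrite Cmod_ip_term.
  assert (Hnz : forall k, Cmod (eh k) <> 0 -> k <> (0%Z, 0%Z)).
  { intros k Hk ->. apply Hk. rewrite H0. unfold Cmod; cbn [fst snd].
    replace (0 ^ 2 + 0 ^ 2) with 0 by ring. apply sqrt_0. }
  destruct (Req_dec (Cmod (eh j) * Cmod (eh l) * Cmod (eh (Z2add j l))) 0) as [Hz|Hz].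
  - rewrite Hz, Rmult_0_r. apply majorant_nonneg.
  - apply trilinear_term_le; auto; apply Hnz; intros E; apply Hz; rewrite E; ring.
Qed.

(* Cauchy-Schwarz after splitting [f (j + l) g j m l] as [(f (j + l) sqrt (m l)) (g j sqrt (m l))]. *)
Lemma sums_bounded_convolution (f g m : Z2 -> R) A B M :
  (forall k, 0 <= m k) ->
  sums_bounded (fun k => f k ^ 2) A -> sums_bounded (fun k => g k ^ 2) B -> sums_bounded m M ->
  sums_bounded (fun p : Z2 * Z2 => f (Z2add (fst p) (snd p)) * g (fst p) * m (snd p))
    (M * sqrt (A * B)).
Proof.
  intros Hm HA HB HM.
  pose proof (sums_bounded_ge0 _ _ HA). pose proof (sums_bounded_ge0 _ _ HB).
  pose proof (sums_bounded_ge0 _ _ HM).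
  apply sums_bounded_le_fun with
    (fun p => (f (Z2add (fst p) (snd p)) * sqrt (m (snd p))) * (g (fst p) * sqrt (m (snd p)))).
  { intros p. right. transitivity (f (Z2add (fst p) (snd p)) * g (fst p) * (sqrt (m (snd p)) ^ 2));
      [rewrite pow2_sqrt by auto; ring | ring]. }
  replace (M * sqrt (A * B)) with (sqrt ((A * M) * (B * M))).
  2:{ replace (A * M * (B * M)) with (M ^ 2 * (A * B)) by ring.
      rewrite sqrt_mult, sqrt_pow2 by (auto; try apply pow2_ge_0; nra). reflexivity. }
  apply sums_bounded_mul.
  - apply sums_bounded_le_fun with
      (fun p : Z2 * Z2 => f (fst (Z2add (fst p) (snd p), snd p)) ^ 2 * m (snd (Z2add (fst p) (snd p), snd p))).
    { intros p; cbn [fst snd]. right. rewrite Rpow_mult_distr, pow2_sqrt by auto. ring. }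
    apply (sums_bounded_mul_inj Z2_eq_dec Z2_eq_dec (fun k => f k ^ 2) m); auto.
    + intros; apply pow2_ge_0.
    + intros [[a b] [c d]] [[a' b'] [c' d']]. unfold Z2add; cbn.
      intros E; injection E; intros; f_equal; f_equal; lia.
  - apply sums_bounded_le_fun with (fun p : Z2 * Z2 => g (fst p) ^ 2 * m (snd p)).
    { intros p. right. rewrite Rpow_mult_distr, pow2_sqrt by auto. ring. }
    apply (sums_bounded_mul_inj Z2_eq_dec Z2_eq_dec (fun k => g k ^ 2) m (fun p => p)); auto.
    intros; apply pow2_ge_0.
Qed.

Lemma Z2add_comm j l : Z2add j l = Z2add l j.
Proof. unfold Z2add. f_equal; ring. Qed.

Lemma sums_bounded_majorant r beta eh A B : 3 / 2 < r ->
  sums_bounded (norm_term r (1/2) beta eh) A -> sums_bounded (norm_term r 0 beta eh) B ->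
  sums_bounded (majorant r beta eh) ((2 * PI) ^ 2 * Rpower 2 r * (34 * A * sqrt B)).
Proof.
  intros Hr HA HB.
  assert (HP : sums_bounded (fun k => gev (r + 1/2) beta eh k ^ 2) A).
  { apply sums_bounded_le_fun with (2 := HA). intros k; rewrite norm_term_eq_gev_sq; lra. }
  assert (HQ : sums_bounded (fun k => gev r beta eh k ^ 2) B).
  { apply sums_bounded_le_fun with (2 := HB). intros k; rewrite norm_term_eq_gev_sq, Rplus_0_r; lra. }
  clear HA HB.
  set (P := gev (r + 1/2) beta eh) in *. set (Q := gev r beta eh) in *.
  pose proof (sums_bounded_ge0 _ _ HP) as HA0. pose proof (sums_bounded_ge0 _ _ HQ) as HB0.
  assert (Hw : sums_bounded (fun k => negpow r k ^ 2) (17 ^ 2))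
    by (apply sums_bounded_weaken with 288; [lra | apply sums_bounded_negpow_sq; auto]).
  assert (HPw := sums_bounded_mul _ _ _ _ HP Hw).
  assert (HQw := sums_bounded_mul _ _ _ _ HQ Hw).
  assert (HPw0 : forall k, 0 <= P k * negpow r k)
    by (intros; apply Rmult_le_pos; [apply gev_nonneg | apply negpow_nonneg]).
  assert (HQw0 : forall k, 0 <= Q k * negpow r k)
    by (intros; apply Rmult_le_pos; [apply gev_nonneg | apply negpow_nonneg]).
  assert (H1 := sums_bounded_convolution P Q _ A B _ HPw0 HP HQ HPw).
  assert (H2 := sums_bounded_convolution P P _ A A _ HQw0 HP HP HQw).
  (* The second term of [majorant] is this convolution with [j] and [l] exchanged. *)
  apply (sums_bounded_comp_inj _ (fun p : Z2 * Z2 => (snd p, fst p))) in H2;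
    [|intros [a b] [c d]; cbn; congruence].
  cbn [fst snd] in H2.
  assert (Hsum := sums_bounded_add _ _ _ _ H1 H2).
  assert (Hc : 0 <= (2 * PI) ^ 2 * Rpower 2 r)
    by (apply Rmult_le_pos; [apply pow_le; pose proof PI_RGT_0; lra | left; apply exp_pos]).
  apply sums_bounded_scal with (a := (2 * PI) ^ 2 * Rpower 2 r) in Hsum; auto.
  eapply sums_bounded_weaken; [|eapply sums_bounded_le_fun; [|exact Hsum]].
  - apply Rmult_le_compat_l; auto. right.
    rewrite !sqrt_mult, sqrt_pow2 by (auto; lra).
    rewrite <- (sqrt_sqrt A HA0) at 5. ring.
  - intros p. right. unfold majorant. rewrite (Z2add_comm (snd p)). fold P Q. ring.
Qed.

Lemma CW_mul_2PI_ge1 r : 3 / 2 < r -> 1 <= CW r * (2 * PI).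
Proof.
  intros Hr. unfold CW. pose proof PI_RGT_0.
  replace (/ (2 * PI) * ((2 * r - 2) / (2 * r - 3)) * (2 * PI)) with (1 + / (2 * r - 3)) by (field; lra).
  pose proof (Rinv_0_lt_compat (2 * r - 3) ltac:(lra)). lra.
Qed.

Lemma trilinear_bound_le_CW r N0 N1 : 3 / 2 < r -> 0 <= N0 -> 0 <= N1 ->
  2 * ((2 * PI) ^ 2 * Rpower 2 r * (34 * N1 * sqrt N0))
  <= 68 * Rpower 2 r * CW r * sqrt ((2 * PI) ^ 2 * N0) * ((2 * PI) ^ 2 * N1).
Proof.
  intros Hr HN0 HN1. pose proof PI_RGT_0.
  rewrite sqrt_mult, sqrt_pow2 by (try apply pow2_ge_0; lra).
  pose proof (CW_mul_2PI_ge1 r Hr). pose proof (sqrt_pos N0). pose proof (exp_pos (r * ln 2)).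
  assert (H2pi : 0 <= (2 * PI) ^ 2) by (apply pow_le; lra).
  assert (HK : 0 <= (2 * PI) ^ 2 * Rpower 2 r * N1 * sqrt N0)
    by (apply Rmult_le_pos; [apply Rmult_le_pos; [apply Rmult_le_pos|]|]; unfold Rpower; lra).
  replace (68 * Rpower 2 r * CW r * (2 * PI * sqrt N0) * ((2 * PI) ^ 2 * N1))
    with (68 * (CW r * (2 * PI)) * ((2 * PI) ^ 2 * Rpower 2 r * N1 * sqrt N0)) by ring.
  nra.
Qed.

Theorem mainTheorem5 :
  exists C : R, 0 < C /\
  forall (r beta : R) (eh : Z2 -> Cx) (N1 : R),
    3 / 2 < r -> 0 < beta ->
    eh (0%Z, 0%Z) = (0, 0) ->
    (* ||Lambda^{1/2} eta||_beta^2 = (2pi)^2 N1 < infinity *)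
    has_sum (norm_term r (1/2) beta eh) N1 ->
    exists (N0 : R) (S : Cx),
      has_sum (norm_term r 0 beta eh) N0 /\
      has_sumC (ip_term r beta eh) S /\
      Cmod S <= C * Rpower 2 r * CW r
                 * sqrt ((2 * PI) ^ 2 * N0)
                 * ((2 * PI) ^ 2 * N1).
Proof.
  exists 68. split; [lra|].
  intros r beta eh N1 Hr Hbeta H0 HN1.
  assert (Hnt : forall a k, 0 <= norm_term r a beta eh k)
    by (intros; rewrite norm_term_eq_gev_sq; apply pow2_ge_0).
  assert (HS1 := has_sum_sums_bounded Z2_eq_dec _ _ (Hnt _) HN1).
  destruct (has_sum_of_sums_bounded (norm_term r 0 beta eh) N1 (Hnt _)) as [N0 [HN0 [HN00 _]]].
  { exact (sums_bounded_le_fun _ _ _ (fun k => norm_term_le_shift r beta eh k H0) HS1). }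
  assert (HS0 := has_sum_sums_bounded Z2_eq_dec _ _ (Hnt _) HN0).
  destruct (has_sumC_of_dominated (ip_term r beta eh) (majorant r beta eh) _
              (fun p => Cmod_ip_term_le r beta eh p ltac:(lra) ltac:(lra) H0)
              (sums_bounded_majorant r beta eh N1 N0 Hr HS1 HS0)) as [S [HS HSle]].
  exists N0, S. split; [exact HN0 | split; [exact HS|]].
  eapply Rle_trans; [exact HSle|].
  exact (trilinear_bound_le_CW r N0 N1 Hr HN00 (sums_bounded_ge0 _ _ HS1)).
Qed.
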